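(* Fix a real number $\theta>0$ with $\theta\neq 1$ and an integer $N\ge 1$. Choose $\pi\in\mathfrak{S}_N$ at random with probability \[ f(\pi)=\frac{\theta^{\pi^{-1}(N)-1}}{\sum_{\sigma\in\mathfrak{S}_N}\theta^{\sigma^{-1}(N)-1}}. \] Then the probability that the $r$-positional strategy wins (i.e. that $\pi$ is $r$-winnable) is \[ P_r(N,\theta)=\frac{r(1-\theta)\sum_{i=r}^{N-1}\frac{\theta^i}{i}}{1-\theta^N} \] for $1\le r\le N-1$, and is $\frac{1-\theta}{1-\theta^N}$ for $r=0$.
   Context: $\mathfrak{S}_N$ is the set of permutations $\pi=[\pi_1\pi_2\cdots\pi_N]$ of $\{1,\dots,N\}$ in one-line notation; $\pi^{-1}(N)$ is the position of the entry $N$. A left-to-right maximum of $\pi$ is an entry $\pi_j$ larger than every $\pi_i$ with $i<j$. For $r\ge 0$, the $r$-positional strategy rejects $\pi_1,\dots,\pi_r$ and then accepts the first subsequent left-to-right maximum (so for $r=0$ it accepts $\pi_1$); it wins if the accepted entry is $N$, and $\pi$ is then called $r$-winnable. *)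

From HB Require Import structures.
From mathcomp Require Import all_boot all_order all_algebra all_fingroup.
Set Implicit Arguments. Unset Strict Implicit. Unset Printing Implicit Defensive.
Import Order.TTheory GRing.Theory Num.Theory.

(* Conventions: a permutation of {1..N} is pi : 'S_N acting on 'I_N = {0..N-1};
   entry value v : 'I_N stands for v+1, position j : 'I_N stands for j+1. *)

Definition ltr_max (N : nat) (pi : 'S_N) (j : 'I_N) : bool :=
  [forall i : 'I_N, (i < j)%N ==> (pi i < pi j)%N].

(* The r-positional strategy rejects positions 0..r-1 (i.e. pi_1..pi_r) and
   accepts the first subsequent left-to-right maximum; it wins iff the
   accepted entry is the largest entry N (0-based value N-1). *)
Definition r_winnable (N r : nat) (pi : 'S_N) : bool :=
  [exists j : 'I_N,
    [&& (r <= j)%N, ltr_max pi j,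
        [forall k : 'I_N, ((r <= k)%N && (k < j)%N) ==> ~~ ltr_max pi k]
      & (val (pi j) == N.-1)]].

Local Open Scope ring_scope.

(* theta^(pi^{-1}(N) - 1), N = n.+1, largest entry = ord_max *)
Definition weight (R : ringType) (theta : R) (n : nat) (pi : 'S_n.+1) : R :=
  theta ^+ (nat_of_ord ((pi^-1)%g ord_max)).

Definition fprob (R : fieldType) (theta : R) (n : nat) (pi : 'S_n.+1) : R :=
  weight theta pi / \sum_(s : 'S_n.+1) weight theta s.

Definition win_prob (R : fieldType) (theta : R) (n r : nat) : R :=
  \sum_(pi : 'S_n.+1 | r_winnable r pi) fprob theta pi.

From HB Require Import structures.
From mathcomp Require Import all_boot all_order all_algebra all_fingroup.
From mathcomp Require Import ring.
Import Order.TTheory GRing.Theory Num.Theory.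
Set Implicit Arguments. Unset Strict Implicit. Unset Printing Implicit Defensive.

(* If N sits at position j + 1, which has weight theta^j and carries n! permutations, the
   r-positional strategy with r >= 1 wins exactly when r <= j and the largest of the j
   entries preceding N lies among the first r positions: that entry is then the last
   left-to-right maximum before N, whereas otherwise it is accepted instead of N.
   Composing with transpositions of the prefix shows that the location of this prefix
   maximum is uniform over the j positions, so r/j of these n! permutations are won. *)

Lemma card_perm_lmul (T : finType) (s : {perm T}) (P : pred {perm T}) :
  #|[pred pi | P (s * pi)%g]| = #|P|.
Proof. by rewrite -!sum1_card [RHS](reindex_inj (mulgI s)). Qed.

Lemma card_perm_at_indep (T : finType) (i j v : T) :
  #|[pred pi : {perm T} | pi i == v]| = #|[pred pi : {perm T} | pi j == v]|.
Proof.
rewrite -(card_perm_lmul (tperm i j) [pred pi : {perm T} | pi j == v]).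
by apply: eq_card => pi; rewrite !inE permM tpermR.
Qed.

Lemma card_perm_at n (j v : 'I_n.+1) :
  #|[pred pi : 'S_n.+1 | pi j == v]| = n`!.
Proof.
have sum_max_at : \sum_(i < n.+1) #|[pred pi : 'S_n.+1 | pi i == v]| = n.+1`!.
  rewrite -card_Sn -sum1_card.
  rewrite (partition_big (fun pi : 'S_n.+1 => (pi^-1)%g v) predT) //=.
  apply: eq_bigr => i _; rewrite -sum1_card; apply: eq_bigl => pi.
  by rewrite !inE (canF_eq (permKV pi)) eq_sym.
move: sum_max_at; rewrite (eq_bigr _ (fun i _ => card_perm_at_indep i j v)).
by rewrite sum_nat_const card_ord factS => /eqP; rewrite eqn_pmul2l // => /eqP.
Qed.

(* Only meaningful for 0 < j: for j = 0 the arg max over an empty range is junk. *)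
Definition argmax_prefix n (pi : 'S_n.+1) (j : 'I_n.+1) : 'I_n.+1 :=
  [arg max_(i > ord0 | (i < j)%N) pi i].

Section ArgmaxPrefix.

Variables (n : nat) (j : 'I_n.+1).
Hypothesis j_gt0 : (0 < j)%N.
Implicit Types (pi : 'S_n.+1) (i m v : 'I_n.+1).

Lemma argmax_prefix_lt pi : (argmax_prefix pi j < j)%N.
Proof. by rewrite /argmax_prefix; case: arg_maxnP. Qed.

Lemma argmax_prefix_max pi i : (i < j)%N -> (pi i <= pi (argmax_prefix pi j))%N.
Proof. by rewrite /argmax_prefix; case: arg_maxnP => // m _; apply. Qed.

Lemma argmax_prefix_unique pi m : (m < j)%N ->
  (forall i : 'I_n.+1, (i < j)%N -> (pi i <= pi m)%N) -> argmax_prefix pi j = m.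
Proof.
move=> mj m_max; apply: (@perm_inj _ pi); apply: val_inj; apply/eqP.
by rewrite eqn_leq m_max ?argmax_prefix_lt ?argmax_prefix_max.
Qed.

Lemma argmax_prefix_tperm pi m1 m2 : (m1 < j)%N -> (m2 < j)%N ->
  argmax_prefix (tperm m1 m2 * pi)%g j = tperm m1 m2 (argmax_prefix pi j).
Proof.
move=> m1j m2j.
have tperm_lt i : (tperm m1 m2 i < j)%N = (i < j)%N.
  by case: tpermP => [->|->|]; rewrite ?m1j ?m2j.
apply: argmax_prefix_unique => [|i ij]; first by rewrite tperm_lt argmax_prefix_lt.
by rewrite !permM tpermK argmax_prefix_max ?tperm_lt.
Qed.

Lemma card_argmax_prefix_eq v m1 m2 : (m1 < j)%N -> (m2 < j)%N ->
  #|[pred pi : 'S_n.+1 | (pi j == v) && (argmax_prefix pi j == m1)]| =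
  #|[pred pi : 'S_n.+1 | (pi j == v) && (argmax_prefix pi j == m2)]|.
Proof.
move=> m1j m2j; have neq_j m : (m < j)%N -> m != j by rewrite -val_eqE => /ltn_eqF ->.
rewrite -(card_perm_lmul (tperm m1 m2)
  [pred pi : 'S_n.+1 | (pi j == v) && (argmax_prefix pi j == m1)]).
apply: eq_card => pi; rewrite !inE permM tpermD ?neq_j // argmax_prefix_tperm //.
by rewrite (canF_eq (tpermK m1 m2)) tpermL.
Qed.

Lemma card_argmax_prefix_lt v k : (k <= j)%N ->
  #|[pred pi : 'S_n.+1 | (pi j == v) && (argmax_prefix pi j < k)%N]| =
  k * #|[pred pi : 'S_n.+1 | (pi j == v) && (argmax_prefix pi j == ord0)]|.
Proof.
move=> kj; rewrite -sum1_card.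
rewrite (partition_big (fun pi : 'S_n.+1 => argmax_prefix pi j)
                      (fun m : 'I_n.+1 => (m < k)%N)) /=; last by move=> pi /andP[].
rewrite (eq_bigr (fun=> #|[pred pi : 'S_n.+1 |
                            (pi j == v) && (argmax_prefix pi j == ord0)]|)) => [|m mk].
  rewrite -(big_ord_widen _ (fun=> _) (leq_trans kj (ltnW (ltn_ord j)))).
  by rewrite big_const_ord iter_addn_0 mulnC.
rewrite sum1_card -(@card_argmax_prefix_eq v m) ?(leq_trans mk) //.
apply: eq_card => pi; rewrite unfold_in /= !inE -andbA.
by case: (argmax_prefix pi j =P m) => [->|_]; rewrite ?mk ?andbF.
Qed.

Lemma mul_card_argmax_prefix_lt v k : (k <= j)%N ->
  j * #|[pred pi : 'S_n.+1 | (pi j == v) && (argmax_prefix pi j < k)%N]| = k * n`!.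
Proof.
move=> kj; rewrite -(card_perm_at j v).
have -> : #|[pred pi : 'S_n.+1 | pi j == v]| =
          #|[pred pi : 'S_n.+1 | (pi j == v) && (argmax_prefix pi j < j)%N]|.
  by apply: eq_card => pi; rewrite !inE argmax_prefix_lt andbT.
by rewrite !card_argmax_prefix_lt // mulnCA.
Qed.

Lemma ltr_max_argmax_prefix pi : ltr_max pi (argmax_prefix pi j).
Proof.
apply/forallP => i; apply/implyP => i_lt.
have ij := ltn_trans i_lt (argmax_prefix_lt pi).
rewrite ltn_neqAle argmax_prefix_max // andbT val_eqE (inj_eq perm_inj).
by rewrite -val_eqE ltn_eqF.
Qed.

Lemma not_ltr_max_after_argmax_prefix pi (k : 'I_n.+1) :
  (argmax_prefix pi j < k < j)%N -> ~~ ltr_max pi k.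
Proof.
case/andP=> ak kj; apply/negP => /forallP /(_ (argmax_prefix pi j)).
by rewrite ak /= ltnNge argmax_prefix_max.
Qed.

Lemma no_ltr_max_betweenE pi r :
  [forall k : 'I_n.+1, ((r <= k) && (k < j))%N ==> ~~ ltr_max pi k] =
  (argmax_prefix pi j < r)%N.
Proof.
apply/forallP/idP => [no_max | ar k].
  rewrite ltnNge; apply/negP => ra.
  by have := no_max (argmax_prefix pi j); rewrite ra argmax_prefix_lt ltr_max_argmax_prefix.
apply/implyP => /andP[rk kj].
by rewrite not_ltr_max_after_argmax_prefix // (leq_trans ar rk).
Qed.

End ArgmaxPrefix.

Section Winnable.

Variable n : nat.
Implicit Types (pi : 'S_n.+1) (j : 'I_n.+1).

Lemma ltr_max_at_max pi j : pi j = ord_max -> ltr_max pi j.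
Proof.
move=> pij; apply/forallP => i; apply/implyP => ij.
have : pi i != pi j by rewrite (inj_eq perm_inj) -val_eqE ltn_eqF.
by rewrite pij -val_eqE ltn_neqAle -ltnS ltn_ord andbT.
Qed.

Lemma r_winnable_at r pi j : pi j = ord_max ->
  r_winnable r pi =
  (r <= j)%N && [forall k : 'I_n.+1, ((r <= k) && (k < j))%N ==> ~~ ltr_max pi k].
Proof.
move=> pij; apply/existsP/andP => [[j' /and4P[rj' _ no_max /eqP pij']] | [rj no_max]].
  suff -> : j = j' by [].
  by apply: (@perm_inj _ pi); apply: val_inj; rewrite pij pij'.
by exists j; rewrite rj ltr_max_at_max // no_max pij eqxx.
Qed.

Lemma r_winnable_argmax r pi j : (0 < r)%N -> pi j = ord_max ->
  r_winnable r pi = (r <= j)%N && (argmax_prefix pi j < r)%N.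
Proof.
move=> r_gt0 pij; rewrite (r_winnable_at _ pij).
by case: (leqP r j) => // rj; rewrite (no_ltr_max_betweenE (leq_trans r_gt0 rj)).
Qed.

Lemma r_winnable0 pi : r_winnable 0 pi = (pi ord0 == ord_max).
Proof.
rewrite (r_winnable_at _ (permKV pi ord_max)) (canF_eq (permK pi)).
case: (posnP ((pi^-1)%g ord_max)) => [j0 | j_gt0].
  rewrite -val_eqE /= j0 eqxx.
  by apply/forallP => k; rewrite ltn0.
rewrite (no_ltr_max_betweenE j_gt0) ltn0 -val_eqE /= eq_sym.
by apply/esym/negbTE; rewrite -lt0n.
Qed.

End Winnable.

Local Open Scope ring_scope.

Lemma weight_at (R : nzRingType) (theta : R) n (pi : 'S_n.+1) j :
  pi j = ord_max -> weight theta pi = theta ^+ j.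
Proof. by move=> pij; rewrite /weight -pij permK. Qed.

Lemma sum_weight_at (R : nzRingType) (theta : R) n (P : pred 'S_n.+1) :
  \sum_(pi | P pi) weight theta pi =
  \sum_(j < n.+1) theta ^+ j *+ #|[pred pi : 'S_n.+1 | P pi && (pi j == ord_max)]|.
Proof.
rewrite (partition_big (fun pi : 'S_n.+1 => (pi^-1)%g ord_max) predT) //=.
apply: eq_bigr => j _; rewrite -sumr_const; apply: eq_big => [pi | pi /andP[_ /eqP <-]] //.
by rewrite inE (canF_eq (permKV pi)) eq_sym.
Qed.

Lemma sum_weight (R : nzRingType) (theta : R) n :
  \sum_(pi : 'S_n.+1) weight theta pi = n`!%:R * \sum_(j < n.+1) theta ^+ j.
Proof.
rewrite sum_weight_at mulr_sumr; apply: eq_bigr => j _.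
by rewrite (eq_card (B := [pred pi : 'S_n.+1 | pi j == ord_max])) // card_perm_at mulr_natl.
Qed.

Lemma sum_weight_r_winnable0 (R : nzRingType) (theta : R) n :
  \sum_(pi : 'S_n.+1 | r_winnable 0 pi) weight theta pi = n`!%:R.
Proof.
rewrite (eq_bigl (fun pi : 'S_n.+1 => pi ord0 == ord_max)) => [|pi]; last exact: r_winnable0.
rewrite (eq_bigr (fun=> 1)) => [|pi /eqP pi0]; last by rewrite (weight_at _ pi0) expr0.
by rewrite sumr_const card_perm_at.
Qed.

Lemma sum_weight_r_winnable (R : numFieldType) (theta : R) n r : (0 < r)%N ->
  \sum_(pi : 'S_n.+1 | r_winnable r pi) weight theta pi =
  r%:R * n`!%:R * \sum_(r <= i < n.+1) theta ^+ i / i%:R.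
Proof.
move=> r_gt0; rewrite sum_weight_at big_geq_mkord mulr_sumr [RHS]big_mkcond.
apply: eq_bigr => j _ /=; case: (leqP r j) => [rj | jr]; last first.
  rewrite eq_card0 // => pi; rewrite !inE.
  case: (pi j =P ord_max) => [/(r_winnable_argmax r_gt0)->|]; last by rewrite andbF.
  by rewrite leqNgt jr.
have j_gt0 : (0 < j)%N := leq_trans r_gt0 rj.
have count := mul_card_argmax_prefix_lt j_gt0 ord_max rj.
rewrite (eq_card (B := [pred pi : 'S_n.+1 |
                          (pi j == ord_max) && (argmax_prefix pi j < r)%N])); last first.
  move=> pi; rewrite !inE; case: (pi j =P ord_max) => [pij|]; last by rewrite andbF.
  by rewrite (r_winnable_argmax r_gt0 pij) rj andbT.
have j_neq0 : j%:R != 0 :> R by rewrite pnatr_eq0 -lt0n.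
have countR : j%:R * #|[pred pi : 'S_n.+1 |
                          (pi j == ord_max) && (argmax_prefix pi j < r)%N]|%:R =
              r%:R * n`!%:R :> R by rewrite -!natrM count.
by rewrite -mulr_natr -[#|_|%:R](mulKf j_neq0) countR; field.
Qed.

Theorem theorem2p3 (R : realFieldType) (theta : R) (n : nat) :
  0 < theta -> theta != 1 ->
  (forall r : nat, (1 <= r)%N -> (r <= n)%N ->
     win_prob theta n r =
       r%:R * (1 - theta) * (\sum_(r <= i < n.+1) theta ^+ i / i%:R)
         / (1 - theta ^+ n.+1))
  /\ win_prob theta n 0 = (1 - theta) / (1 - theta ^+ n.+1).
Proof.
move=> theta_gt0 theta_neq1.
have geometric : (1 - theta) * \sum_(j < n.+1) theta ^+ j = 1 - theta ^+ n.+1.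
  by rewrite -[1 - theta ^+ _]opprB subrX1 -mulNr opprB.
have one_sub_pow_neq0 : 1 - theta ^+ n.+1 != 0.
  by rewrite subr_eq0 eq_sym pexpr_eq1 // ltW.
have sum_neq0 : \sum_(j < n.+1) theta ^+ j != 0.
  by apply: contraNneq one_sub_pow_neq0 => sum0; rewrite -geometric sum0 mulr0.
have fact_neq0 : n`!%:R != 0 :> R by rewrite pnatr_eq0 -lt0n fact_gt0.
have one_sub_neq0 : 1 - theta != 0 by rewrite subr_eq0 eq_sym.
split => [r r_gt0 _|]; rewrite /win_prob /fprob -mulr_suml sum_weight -geometric.
  by rewrite sum_weight_r_winnable //; field; rewrite sum_neq0 one_sub_neq0 fact_neq0.
by rewrite sum_weight_r_winnable0; field; rewrite sum_neq0 one_sub_neq0 fact_neq0.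
Qed.
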